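(* Let $\mathbf{k}$ be a commutative domain of characteristic zero, and let $\omega=xy-(\phi(x)+y\psi(x))\in\mathcal{T}$ with $\phi,\psi\in\mathbf{k}[x]$. The following are equivalent: (a) for every commutative Rota-Baxter $\mathbf{k}$-algebra $(R,P)$ of weight $0$, the $\omega$-cover $\widetilde{P}$ of $P$ on the Hurwitz series algebra $(R^{\mathbb{N}},\partial_R)$ of weight $0$ is again a Rota-Baxter operator of weight $0$; (b) $\omega\in\mathcal{T}_0:=\{xy-a_0\mid a_0\in\mathbf{k}\}\cup\{xy-(b_0y+yx)\mid b_0\in\mathbf{k}\}$.
   Context: All algebras are commutative $\mathbf{k}$-algebras with identity. $\mathbf{k}\langle x,y\rangle$ is the noncommutative polynomial algebra and $\mathcal{T}:=\{xy-(\phi(x)+y\psi(x))\mid \phi,\psi\in\mathbf{k}[x]\}$. For $\lambda\in\mathbf{k}$, a Rota-Baxter operator of weight $\lambda$ on an algebra $R$ is a $\mathbf{k}$-linear $P:R\to R$ with $P(x)P(y)=P(P(x)y)+P(xP(y))+\lambda P(xy)$ for all $x,y\in R$. For an algebra $R$, $R^{\mathbb{N}}$ is the set of sequences $f=(f_n)_{n\in\mathbb N}$ in $R$ with componentwise module structure and the $\lambda$-Hurwitz product $(fg)_n=\sum_{k=0}^{n}\sum_{j=0}^{n-k}\binom{n}{k}\binom{n-k}{j}\lambda^k f_{n-j}g_{k+j}$ (for $\lambda=0$: $(fg)_n=\sum_{j=0}^n\binom{n}{j}f_{n-j}g_j$); $\partial_R:R^{\mathbb N}\to R^{\mathbb N}$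 is $(\partial_R f)_n=f_{n+1}$. Write $\phi(x)=\sum_{i=0}^r a_ix^i$, $\psi(x)=\sum_{j=0}^s b_jx^j$. Given a linear operator $P$ on $R$, the $\omega$-cover of $P$ is the unique linear operator $\widetilde P$ on $R^{\mathbb N}$ with $\widetilde P(f)_0=P(f_0)$ and $\partial_R\widetilde P=\phi(\partial_R)+\widetilde P\psi(\partial_R)$; equivalently, writing $\widetilde P_n(f):=\widetilde P(f)_n$, for all $n\ge1$: $\widetilde P_n(f)=\sum_{i=0}^r a_i f_{n-1+i}+\sum_{j=0}^s b_j\widetilde P_{n-1}(\partial_R^j f)$. *)

From HB Require Import structures.
From mathcomp Require Import all_boot all_order all_algebra.
Set Implicit Arguments. Unset Strict Implicit. Unset Printing Implicit Defensive.
Import Order.TTheory GRing.Theory Num.Theory.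
Local Open Scope ring_scope.

Definition is_RB0 (k : idomainType) (R : comAlgType k) (P : R -> R) : Prop :=
  (forall (a : k) (x y : R), P (a *: x + y) = a *: P x + P y) /\
  (forall x y : R, P x * P y = P (P x * y) + P (x * P y)).

Definition hmul0 (k : idomainType) (R : comAlgType k) (f g : nat -> R) : nat -> R :=
  fun n => \sum_(j < n.+1) ('C(n, j))%:R * (f (n - j)%N * g j).

Fixpoint omega_cover (k : idomainType) (R : comAlgType k) (phi psi : {poly k})
    (P : R -> R) (f : nat -> R) (n : nat) {struct n} : R :=
  match n with
  | 0 => P (f 0%N)
  | n'.+1 =>
      \sum_(i < size phi) phi`_i *: f (n' + i)%N
      + \sum_(j < size psi) psi`_j *:
          omega_cover phi psi P (fun m => f (m + j)%N) n'
  end.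

Definition is_RB0_hurwitz (k : idomainType) (R : comAlgType k)
    (Q : (nat -> R) -> (nat -> R)) : Prop :=
  (forall (a : k) (f g : nat -> R) (n : nat),
      Q (fun m => a *: f m + g m) n = a *: Q f n + Q g n) /\
  (forall (f g : nat -> R) (n : nat),
      hmul0 (Q f) (Q g) n = Q (hmul0 (Q f) g) n + Q (hmul0 f (Q g)) n).

(* omega = xy - (phi(x) + y psi(x)) lies in T_0 =
   {xy - a0} u {xy - (b0 y + y x)} *)
Definition in_T0 (k : idomainType) (phi psi : {poly k}) : Prop :=
  (exists a0 : k, phi = a0%:P /\ psi = 0) \/
  (exists b0 : k, phi = 0 /\ psi = b0%:P + 'X).

(* Sufficiency: for [omega = xy - a0] the cover satisfies [(Q f)' = a0 f], and for
   [omega = xy - (b0 y + yx)] it satisfies [(Q f)' = b0 Q f + Q f'], where ['] is the shift.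
   The shift is a derivation of the Hurwitz product, so in both cases the Rota-Baxter
   defect obeys a linear recursion and vanishes with its value at 0, which is the
   Rota-Baxter identity of [P].

   Necessity: take [R = k[X]] and [P = 0]. The cover sends the exponential sequence
   [(nu^m)] to [(phi(nu) h_m(nu, psi(nu)))], with [h_m(x, y) = (x^m - y^m) / (x - y)],
   and the Rota-Baxter identity on such sequences in degrees 1, 2, 3 yields polynomial
   identities: a nonconstant [phi] would force [psi] to be an involution [b0 - X] and
   then [phi] to be constant, while a nonzero constant [phi] forces [psi = 0].
   For [phi = 0] the zero operator says nothing; on [k[X][e]/(e^3)] with twice the formal
   integral, the [e^2]-coefficient of the identity in degree 1 gives
   [2 (psi + psi(0)) = psi(psi) + psi(X + psi(0))], whose solutions are [psi = 0] and
   [psi = X + b0]. Characteristic zero is used to cancel the integers that appear. *)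

From HB Require Import structures.
From mathcomp Require Import all_boot all_order all_algebra.
From mathcomp Require Import ring zify.
From Stdlib Require Import FunctionalExtensionality.
Import GRing.Theory.
Local Open Scope ring_scope.
Set Implicit Arguments. Unset Strict Implicit. Unset Printing Implicit Defensive.

Section HurwitzProduct.
Variables (k : idomainType) (R : comAlgType k).
Implicit Types f g : nat -> R.

Definition shift f : nat -> R := fun m => f m.+1.

Definition expseq (x : R) : nat -> R := fun m => x ^+ m.

Lemma hmul0C f g n : hmul0 f g n = hmul0 g f n.
Proof.
rewrite /hmul0 (reindex_inj rev_ord_inj) /=; apply: eq_bigr => j _.
have hj : (j <= n)%N by rewrite -ltnS.
by rewrite subSS subKn // bin_sub // [f j * _]mulrC.
Qed.

Lemma hmul0Dl f1 f2 g n :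
  hmul0 (fun m => f1 m + f2 m) g n = hmul0 f1 g n + hmul0 f2 g n.
Proof. by rewrite /hmul0 -big_split; apply: eq_bigr => j _; rewrite mulrDl mulrDr. Qed.

Lemma hmul0Dr f g1 g2 n :
  hmul0 f (fun m => g1 m + g2 m) n = hmul0 f g1 n + hmul0 f g2 n.
Proof. by rewrite hmul0C hmul0Dl !(hmul0C f). Qed.

Lemma hmul0Ml r f g n : hmul0 (fun m => r * f m) g n = r * hmul0 f g n.
Proof. by rewrite /hmul0 mulr_sumr; apply: eq_bigr => j _; ring. Qed.

Lemma hmul0Mr r f g n : hmul0 f (fun m => r * g m) n = r * hmul0 f g n.
Proof. by rewrite hmul0C hmul0Ml hmul0C. Qed.

Lemma hmul0Zl a f g n : hmul0 (fun m => a *: f m) g n = a *: hmul0 f g n.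
Proof.
rewrite -mulr_algl -hmul0Ml; congr hmul0.
by apply: functional_extensionality => m; rewrite mulr_algl.
Qed.

Lemma hmul0Zr a f g n : hmul0 f (fun m => a *: g m) n = a *: hmul0 f g n.
Proof. by rewrite hmul0C hmul0Zl hmul0C. Qed.

Lemma hmul00l g n : hmul0 (fun _ => 0) g n = 0.
Proof. by rewrite /hmul0 big1 // => j _; rewrite mul0r mulr0. Qed.

Lemma hmul0_0 f g : hmul0 f g 0 = f 0%N * g 0%N.
Proof. by rewrite /hmul0 big_ord1 /= bin0 mul1r. Qed.

Lemma hmul0_1 f g : hmul0 f g 1 = f 1%N * g 0%N + f 0%N * g 1%N.
Proof. by rewrite /hmul0 big_ord_recr big_ord1 /= bin0 bin1 !mul1r. Qed.

Lemma hmul0_2 f g :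
  hmul0 f g 2 = f 2%N * g 0%N + (f 1%N * g 1%N) *+ 2 + f 0%N * g 2%N.
Proof. by rewrite /hmul0 2!big_ord_recr big_ord1 /= bin0 binn !mul1r mulr_natl. Qed.

Lemma hmul0_3 f g : hmul0 f g 3 =
  f 3%N * g 0%N + (f 2%N * g 1%N) *+ 3 + (f 1%N * g 2%N) *+ 3 + f 0%N * g 3%N.
Proof. by rewrite /hmul0 3!big_ord_recr big_ord1 /= bin0 binn !mul1r !mulr_natl. Qed.

Lemma hmul0S f g n : hmul0 f g n.+1 = hmul0 (shift f) g n + hmul0 f (shift g) n.
Proof.
have natE h1 h2 p :
    hmul0 h1 h2 p = \sum_(0 <= j < p.+1) 'C(p, j)%:R * (h1 (p - j)%N * h2 j).
  by rewrite big_mkord.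
rewrite !natE /shift big_nat_recl // bin0 subn0.
have -> : \sum_(0 <= i < n.+1) 'C(n.+1, i.+1)%:R * (f (n.+1 - i.+1)%N * g i.+1)
   = \sum_(0 <= i < n.+1) 'C(n, i.+1)%:R * (f (n - i)%N * g i.+1)
   + \sum_(0 <= i < n.+1) 'C(n, i)%:R * (f (n - i)%N * g i.+1).
  by rewrite -big_split; apply: eq_bigr => i _; rewrite binS natrD mulrDl subSS.
rewrite [in RHS]big_nat_recl // bin0 subn0 addrA; congr (_ + _).
rewrite big_nat_recr //= bin_small // mul0r addr0; congr (_ + _).
rewrite big_nat_cond [in RHS]big_nat_cond.
apply: eq_bigr => i /andP [/andP [_ hi] _].
by rewrite subnS prednK // subn_gt0.
Qed.

Lemma shift_hmul0 f g :
  shift (hmul0 f g) = fun m => hmul0 (shift f) g m + hmul0 f (shift g) m.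
Proof. by apply: functional_extensionality => m; rewrite /shift hmul0S. Qed.

Lemma hmul0_expseq x y n : hmul0 (expseq x) (expseq y) n = (x + y) ^+ n.
Proof. by rewrite exprDn /hmul0; apply: eq_bigr => j _; rewrite mulrC mulr_natr. Qed.

Lemma hmul0_expseq0r f : hmul0 f (expseq 0) = f.
Proof.
apply: functional_extensionality => n.
rewrite /hmul0 big_ord_recl /= bin0 subn0 /expseq expr0 mulr1 mul1r.
by rewrite big1 ?addr0 // => i _; rewrite expr0n /= !mulr0.
Qed.

Lemma hmul0_expseq0l f : hmul0 (expseq 0) f = f.
Proof.
by apply: functional_extensionality => n; rewrite hmul0C hmul0_expseq0r.
Qed.

End HurwitzProduct.

Section OmegaCover.
Variables (k : idomainType) (R : comAlgType k).
Variables (phi psi : {poly k}) (P : R -> R).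
Implicit Types f g : nat -> R.
Local Notation Q := (omega_cover phi psi P).

Lemma coverS f n : Q f n.+1 =
  \sum_(i < size phi) phi`_i *: f (n + i)%N
  + \sum_(j < size psi) psi`_j *: Q (fun m => f (m + j)%N) n.
Proof. by []. Qed.

Lemma sum_coef_polyC (c : k) (F : nat -> R) :
  \sum_(i < size c%:P) c%:P`_i *: F i = c *: F 0%N.
Proof.
rewrite size_polyC; case: eqP => [->|_]; first by rewrite big_ord0 scale0r.
by rewrite big_ord1 coefC.
Qed.

Lemma sum_coef_XaddC (c : k) (F : nat -> R) :
  \sum_(i < size (c%:P + 'X)) (c%:P + 'X)`_i *: F i = c *: F 0%N + F 1%N.
Proof.
rewrite addrC size_XaddC big_ord_recl big_ord1 /= !coefD !coefX !coefC /=.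
by rewrite add0r addr0 scale1r.
Qed.

Lemma cover_mulr (r : R) : (forall x, P (r * x) = r * P x) ->
  forall n f, Q (fun m => r * f m) n = r * Q f n.
Proof.
move=> Pr; elim=> [|n IH] f; first exact: Pr.
rewrite !coverS mulrDr !mulr_sumr; congr (_ + _); apply: eq_bigr => i _.
  by rewrite scalerAr.
by rewrite (IH (fun m => f (m + i)%N)) scalerAr.
Qed.

Hypothesis P_lin : forall (a : k) (x y : R), P (a *: x + y) = a *: P x + P y.

Lemma cover_lin n : forall a f g,
  Q (fun m => a *: f m + g m) n = a *: Q f n + Q g n.
Proof.
elim: n => [|n IH] a f g; first exact: P_lin.
rewrite !coverS scalerDr !scaler_sumr addrACA -!big_split /=; congr (_ + _).
  by apply: eq_bigr => i _; rewrite scalerDr !scalerA mulrC.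
by apply: eq_bigr => j _; rewrite IH scalerDr !scalerA mulrC.
Qed.

Lemma cover0 n : Q (fun _ => 0) n = 0.
Proof.
have := cover_lin n (-1) (fun _ => 0) (fun _ => 0).
under [fun _ => _]functional_extensionality => m do rewrite scaler0 addr0.
by rewrite scaleN1r addNr.
Qed.

Lemma coverD n f g : Q (fun m => f m + g m) n = Q f n + Q g n.
Proof.
have := cover_lin n 1 f g; rewrite scale1r => <-.
by congr Q; apply: functional_extensionality => m; rewrite scale1r.
Qed.

End OmegaCover.
Arguments coverS {k R phi psi P}.
Arguments cover_mulr {k R phi psi P r}.
Arguments cover_lin {k R phi psi P}.
Arguments cover0 {k R phi psi P}.
Arguments coverD {k R phi psi P}.

Section Sufficiency.
Variables (k : idomainType) (R : comAlgType k) (P : R -> R).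
Hypothesis P_RB : is_RB0 P.

Lemma RB_cover_polyC (a0 : k) : is_RB0_hurwitz (omega_cover a0%:P 0 P).
Proof.
case: P_RB => P_lin P_rb; split=> [a f g n|]; first exact: cover_lin.
set Q := omega_cover a0%:P 0 P.
have QS f n : Q f n.+1 = a0 *: f n.
  rewrite /Q coverS (sum_coef_polyC a0 (fun i => f (n + i)%N)).
  by rewrite size_poly0 big_ord0 addr0 addn0.
have shiftQ f : shift (Q f) = fun m => a0 *: f m.
  by apply: functional_extensionality => m; rewrite /shift QS.
move=> f g [|n]; first by rewrite !hmul0_0 /Q /= !hmul0_0 P_rb.
by rewrite hmul0S !shiftQ hmul0Zl hmul0Zr !QS addrC.
Qed.

Lemma RB_cover_XaddC (b0 : k) : is_RB0_hurwitz (omega_cover 0 (b0%:P + 'X) P).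
Proof.
case: P_RB => P_lin P_rb; split=> [a f g n|]; first exact: cover_lin.
set Q := omega_cover 0 (b0%:P + 'X) P.
have QS f n : Q f n.+1 = b0 *: Q f n + Q (shift f) n.
  rewrite /Q coverS size_poly0 big_ord0 add0r
    (sum_coef_XaddC b0 (fun i => omega_cover _ _ P (fun m => f (m + i)%N) n)).
  by congr (_ *: omega_cover _ _ _ _ _ + omega_cover _ _ _ _ _);
    apply: functional_extensionality => i; rewrite ?addn0 ?addn1.
have shiftQ f : shift (Q f) = fun m => b0 *: Q f m + Q (shift f) m.
  by apply: functional_extensionality => m; rewrite /shift QS.
have shift_hmul0Ql f g : shift (hmul0 (Q f) g) = fun m =>
    b0 *: hmul0 (Q f) g m + (hmul0 (Q (shift f)) g m + hmul0 (Q f) (shift g) m).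
  apply: functional_extensionality => m.
  by rewrite shift_hmul0 shiftQ hmul0Dl hmul0Zl addrA.
have shift_hmul0Qr f g : shift (hmul0 f (Q g)) = fun m =>
    b0 *: hmul0 f (Q g) m + (hmul0 (shift f) (Q g) m + hmul0 f (Q (shift g)) m).
  apply: functional_extensionality => m.
  by rewrite shift_hmul0 shiftQ hmul0Dr hmul0Zr addrCA.
pose defect f g n :=
  hmul0 (Q f) (Q g) n - Q (hmul0 (Q f) g) n - Q (hmul0 f (Q g)) n.
suff defect0 : forall n f g, defect f g n = 0.
  by move=> f g n; apply/eqP; rewrite -subr_eq0 opprD addrA; apply/eqP/defect0.
(* The defect satisfies a linear recursion, so it vanishes with its initial values. *)
have defectS n f g : defect f g n.+1 =
    (b0 *: defect f g n) *+ 2 + defect (shift f) g n + defect f (shift g) n.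
  rewrite /defect hmul0S !shiftQ hmul0Dl hmul0Dr hmul0Zl hmul0Zr !QS.
  rewrite shift_hmul0Ql shift_hmul0Qr /Q !cover_lin // !coverD //.
  rewrite !scalerBr; ring.
elim=> [|n IH] f g; first by rewrite /defect !hmul0_0 /Q /= !hmul0_0 P_rb; ring.
by rewrite defectS !IH scaler0 mul0rn !addr0.
Qed.

End Sufficiency.

Section DividedDifference.
Variables (k : idomainType) (R : comAlgType k).

(* [hsum x y m] is the complete homogeneous polynomial of degree [m - 1] in [x, y]. *)
Fixpoint hsum (x y : R) (m : nat) : R :=
  match m with 0 => 0 | m'.+1 => x ^+ m' + y * hsum x y m' end.

Lemma hsumP x y m : (x - y) * hsum x y m = x ^+ m - y ^+ m.
Proof.
elim: m => [|m IH] /=; first by rewrite mulr0 !expr0 subrr.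
by rewrite mulrDr mulrCA IH !exprS; ring.
Qed.

Lemma hmul0_hsum_expseq x y z m :
  hmul0 (hsum x y) (expseq z) m = hsum (x + z) (y + z) m.
Proof.
elim: m => [|m IH]; first by rewrite hmul0_0 mul0r.
rewrite hmul0S.
have -> : shift (hsum x y) = fun m => expseq x m + y * hsum x y m by [].
have -> : shift (expseq z) = fun m => z * expseq z m.
  by apply: functional_extensionality => i; rewrite /shift /expseq exprS.
by rewrite hmul0Dl hmul0Ml hmul0Mr hmul0_expseq IH /=; ring.
Qed.

Definition peval (p : {poly k}) (x : R) : R := \sum_(i < size p) p`_i *: x ^+ i.

Definition ddiff (p : {poly k}) (x y : R) : R := \sum_(i < size p) p`_i *: hsum x y i.

Lemma ddiffP p x y : (x - y) * ddiff p x y = peval p x - peval p y.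
Proof.
rewrite /ddiff /peval mulr_sumr -sumrB; apply: eq_bigr => i _.
by rewrite -scalerAr hsumP scalerBr.
Qed.

Lemma ddiff_mull (p : {poly k}) r x y :
  \sum_(i < size p) p`_i *: (r * hsum x y i) = r * ddiff p x y.
Proof. by rewrite /ddiff mulr_sumr; apply: eq_bigr => i _; rewrite scalerAr. Qed.

Lemma ddiff_addnP (p : {poly k}) j r x y :
  (x - y) * \sum_(i < size p) p`_i *: (r * hsum x y (i + j))
  = r * (x ^+ j * peval p x - y ^+ j * peval p y).
Proof.
rewrite /peval !mulr_sumr -sumrB mulr_sumr; apply: eq_bigr => i _.
by rewrite -!scalerAr -scalerBr -scalerAr mulrCA hsumP !exprD; congr (_ *: _); ring.
Qed.

Lemma ddiff_convP (p q : {poly k}) r x y :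
  (x - y) * \sum_(j < size q) q`_j *: \sum_(i < size p) p`_i *: (r * hsum x y (i + j))
  = r * (peval q x * peval p x - peval q y * peval p y).
Proof.
rewrite mulr_sumr /peval !mulr_suml -sumrB mulr_sumr; apply: eq_bigr => j _.
by rewrite -scalerAr ddiff_addnP -!scalerAl -scalerBr -scalerAr.
Qed.

End DividedDifference.

Section ZeroOperator.
Variables (k : idomainType) (R : comAlgType k) (phi psi : {poly k}).
Local Notation Q := (omega_cover phi psi (fun _ : R => 0)).

Lemma cover_zero_expseq nu n :
  Q (expseq nu) n = peval phi nu * hsum nu (peval psi nu) n.
Proof.
elim: n => [|n IH]; first by rewrite /= mulr0.
have mul0P (r x : R) : 0 = r * 0 by rewrite mulr0.
rewrite coverS /= mulrDr [_ * (_ * _)]mulrCA -IH; congr (_ + _).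
  rewrite /peval mulr_suml; apply: eq_bigr => i _.
  by rewrite /expseq exprD -scalerAl [nu ^+ n * _]mulrC.
rewrite /peval mulr_suml; apply: eq_bigr => j _.
rewrite -scalerAl -(cover_mulr (P := fun _ => 0) (mul0P _)); congr (_ *: Q _ n).
by apply: functional_extensionality => m; rewrite /expseq exprD mulrC.
Qed.

Lemma cover_zero_0 h : Q h 0 = 0.
Proof. by []. Qed.

Lemma cover_zero_1 h : Q h 1 = \sum_(i < size phi) phi`_i *: h i.
Proof.
rewrite coverS /= [X in _ + X]big1 ?addr0 => [|j _]; last by rewrite scaler0.
by apply: eq_bigr => i _; rewrite add0n.
Qed.

Lemma cover_zero_2 h : Q h 2 = \sum_(i < size phi) phi`_i *: h (i + 1)%N
   + \sum_(j < size psi) psi`_j *: \sum_(i < size phi) phi`_i *: h (i + j)%N.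
Proof.
rewrite coverS; congr (_ + _); first by apply: eq_bigr => i _; rewrite addnC.
by apply: eq_bigr => j _; rewrite cover_zero_1.
Qed.

End ZeroOperator.

Section PolyFacts.
Variable k : idomainType.
Hypothesis hchar : [pchar k] =i pred0.

Lemma peval_comp (p q : {poly k}) : peval p q = p \Po q.
Proof. by rewrite comp_polyE. Qed.

Lemma natr_eq0 n : (n%:R == 0 :> k) = (n == 0%N).
Proof. by move: n; apply/pcharf0P. Qed.

Lemma natr_poly_eq0 n : (n%:R == 0 :> {poly k}) = (n == 0%N).
Proof. by rewrite -polyC_natr polyC_eq0 natr_eq0. Qed.

Lemma size_le2_poly (p : {poly k}) : (size p <= 2)%N -> p = (p`_0)%:P + (p`_1)%:P * 'X.
Proof.
move=> hs; apply/polyP => i; rewrite coefD coefC coefCM coefX.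
case: i => [|[|i]] /=; first by rewrite mulr0 addr0.
  by rewrite mulr1 add0r.
by rewrite mulr0 addr0 nth_default //; apply: leq_trans hs _.
Qed.

Lemma hsum_XaddC (c : k) m :
  (size (hsum 'X ('X + c%:P) m) <= m)%N /\ (hsum 'X ('X + c%:P) m)`_m.-1 = m%:R.
Proof.
elim: m => [|m [IH1 IH2]]; first by rewrite /= size_poly0 coef0.
split.
  rewrite /=; apply: leq_trans (size_polyD _ _) _; rewrite geq_max size_polyXn leqnn /=.
  apply: leq_trans (size_polyMleq _ _) _; rewrite size_XaddC.
  by rewrite (_ : (2 + _).-1 = (size (hsum 'X ('X + c%:P) m)).+1) // ltnS.
rewrite /= coefD coefXn eqxx mulrDl coefD coefXM coefCM.
rewrite [_`_m](nth_default _ IH1) mulr0 addr0.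
by case: m IH1 IH2 => [|m] IH1 IH2 /=; rewrite ?addr0 // IH2 nat1r.
Qed.

(* In characteristic zero the divided difference of a nonconstant [p] between
   [X] and a translate of [X] has its leading coefficient [(deg p) * lead_coef p]. *)
Lemma ddiff_XaddC (p : {poly k}) (c : k) : (2 <= size p)%N ->
  (size (ddiff p 'X ('X + c%:P)) <= (size p).-1)%N /\ ddiff p 'X ('X + c%:P) != 0.
Proof.
move=> hp; have [n Hn] : exists n, size p = n.+2.
  by exists (size p).-2; case: (size p) hp => [|[|s]].
split.
  rewrite /ddiff; elim/big_ind: _ => //.
  - by rewrite size_poly0.
  - by move=> x y hx hy; apply: leq_trans (size_polyD _ _) _; rewrite geq_max hx hy.
  move=> i _; apply: leq_trans (size_scale_leq _ _) _.
  case: (hsum_XaddC c i) => h _; apply: leq_trans h _.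
  by rewrite -ltnS prednK ?ltn_ord // Hn.
apply/eqP => H0.
have : (ddiff p 'X ('X + c%:P))`_n = 0 by rewrite H0 coef0.
rewrite /ddiff coef_sum Hn big_ord_recr /= big1 ?add0r => [|i _]; last first.
  rewrite coefZ; case: (hsum_XaddC c i) => h _.
  by rewrite (nth_default _ (leq_trans h _)) ?mulr0 // -ltnS.
rewrite coefZ; case: (hsum_XaddC c n.+1) => _ /= ->.
move/eqP; rewrite mulf_eq0 natr_eq0 /= orbF => /eqP hl.
have : lead_coef p != 0 by rewrite lead_coef_eq0 -size_poly_eq0 Hn.
by rewrite lead_coefE Hn /= hl eqxx.
Qed.

Lemma poly_involution (p : {poly k}) : p \Po p = 'X -> p != 'X -> p = (p`_0)%:P - 'X.
Proof.
move=> p_invol p_neqX.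
have p_size2 : size p = 2.
  have := size_comp_poly p p; rewrite p_invol size_polyX /=.
  move/esym/eqP; rewrite muln_eq1 andbb => /eqP h1.
  by case: (size p) h1 => [|[|[|]]].
have pE := size_le2_poly (eq_leq p_size2).
set b0 := p`_0 in pE *; set b1 := p`_1 in pE.
have hb : 'X = b0%:P + b1%:P * (b0%:P + b1%:P * 'X).
  rewrite -{1}p_invol -pE; transitivity ((b0%:P + b1%:P * 'X) \Po p); first by rewrite -pE.
  by rewrite comp_polyD comp_polyM !comp_polyC comp_polyX.
have c1 : b1 * b1 = 1.
  move: (congr1 (fun q : {poly k} => q`_1) hb).
  by rewrite /= coefX coefD coefC coefCM coefD coefC coefCM coefX /= add0r add0r mulr1.
have c0 : b0 + b1 * b0 = 0.
  move: (congr1 (fun q : {poly k} => q`_0) hb).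
  by rewrite /= coefX coefD coefC coefCM coefD coefC coefCM coefX /= !mulr0 !addr0.
have : (b1 - 1) * (b1 + 1) == 0 by apply/eqP; rewrite mulrDr mulrBl c1; ring.
rewrite mulf_eq0 subr_eq0 addr_eq0 => /orP [/eqP b1E|/eqP b1E].
  have : b0 *+ 2 == 0 by rewrite mulr2n -{2}[b0]mul1r -b1E c0.
  rewrite -mulr_natr mulf_eq0 natr_eq0 orbF => /eqP b0E.
  by move: p_neqX; rewrite pE b0E b1E polyC0 add0r mul1r eqxx.
by rewrite {1}pE b1E polyCN polyC1 mulN1r.
Qed.

End PolyFacts.

Section ZeroOperatorOnPolynomials.
Variable k : idomainType.
Hypothesis hchar : [pchar k] =i pred0.
Variables phi psi : {poly k}.
Local Notation Q := (omega_cover phi psi (fun _ : {poly k} => 0)).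
Hypothesis Q_RB : forall (f g : nat -> {poly k}) n,
  hmul0 (Q f) (Q g) n = Q (hmul0 (Q f) g) n + Q (hmul0 f (Q g)) n.

Lemma cover_zero_expseqE nu : Q (expseq nu) = fun m => (phi \Po nu) * hsum nu (psi \Po nu) m.
Proof.
by apply: functional_extensionality => m; rewrite cover_zero_expseq !peval_comp.
Qed.

Lemma hmul0_cover_zero_expseq nu z : hmul0 (Q (expseq nu)) (expseq z)
   = fun m => (phi \Po nu) * hsum (nu + z) ((psi \Po nu) + z) m.
Proof.
apply: functional_extensionality => m.
by rewrite cover_zero_expseqE hmul0Ml hmul0_hsum_expseq.
Qed.

Lemma hmul0_expseq_cover_zero nu z : hmul0 (expseq z) (Q (expseq nu))
   = fun m => (phi \Po nu) * hsum (nu + z) ((psi \Po nu) + z) m.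
Proof.
by apply: functional_extensionality => m; rewrite hmul0C hmul0_cover_zero_expseq.
Qed.

Lemma nonconst_phi_comp_psi : (2 <= size phi)%N ->
  [/\ phi`_0 = 0, phi \Po psi = phi & psi != 'X].
Proof.
move=> hp; have phi_neq0 : phi != 0 by rewrite -size_poly_eq0; case: (size phi) hp.
have := Q_RB (expseq 0) (expseq 'X) 1.
rewrite hmul0_1 !cover_zero_0 mulr0 mul0r addr0 hmul0_cover_zero_expseq hmul0_expseq0l.
rewrite cover_zero_expseqE !cover_zero_1 !ddiff_mull !comp_polyXr add0r !comp_poly0r [_ + 'X]addrC.
case: (ddiff_XaddC hchar (psi`_0) hp) => hsz hnz.
set B := ddiff phi 'X ('X + (psi`_0)%:P) in hsz hnz *.
set A := ddiff phi 'X psi => H.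
(* By degrees, [phi * A = - phi_0 * B] forces [A = 0]. *)
have A0 : A = 0.
  apply/eqP; apply/negPn/negP => hA.
  have e : phi * A = - ((phi`_0)%:P * B) by apply/eqP; rewrite -addr_eq0 addrC -H.
  have := congr1 (fun q : {poly k} => size q) e; rewrite /= size_polyN size_mul // => e2.
  have := size_polyMleq (phi`_0)%:P B; rewrite -e2.
  have := size_polyC_leq1 (phi`_0).
  have : (1 <= size A)%N by rewrite lt0n size_poly_eq0.
  move: hsz hp; rewrite -!subn1.
  set sB := size B; set sA := size A; set sp := size phi; set sC := size _%:P; lia.
rewrite A0 mulr0 addr0 in H.
have h0 : phi`_0 = 0.
  by move/eqP: H; rewrite eq_sym mulf_eq0 (negbTE hnz) orbF polyC_eq0 => /eqP.
split => //.
  have := ddiffP phi 'X psi; rewrite -/A A0 mulr0 !peval_comp comp_polyXr.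
  by move/eqP; rewrite eq_sym subr_eq0 => /eqP.
apply/eqP => psiX; case: (ddiff_XaddC hchar 0 hp) => _.
by move: A0; rewrite /A psiX polyC0 addr0 => ->; rewrite eqxx.
Qed.

Lemma nonconst_phi_psi_involutive : (2 <= size phi)%N -> phi`_0 = 0 -> phi \Po psi = phi ->
  psi \Po psi = 'X.
Proof.
move=> hp h0 hc; have phi_neq0 : phi != 0 by rewrite -size_poly_eq0; case: (size phi) hp.
have Q0 : Q (expseq 0) = fun _ => 0.
  rewrite cover_zero_expseqE; apply: functional_extensionality => m.
  by rewrite comp_poly0r h0 mul0r.
have := Q_RB (expseq 0) (expseq 'X) 2.
rewrite Q0 hmul00l hmul0_expseq0l.
have -> : hmul0 (fun _ => 0) (expseq 'X) = fun _ => 0 :> {poly k}.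
  by apply: functional_extensionality => m; rewrite hmul00l.
rewrite cover0 => [|a x y]; last by rewrite scaler0 addr0.
rewrite add0r [in X in _ = X]cover_zero_expseqE cover_zero_2 comp_polyXr.
have := ddiff_addnP phi 1 phi 'X psi; have := ddiff_convP phi psi phi 'X psi.
rewrite !peval_comp !comp_polyXr hc expr1.
set S1 := \sum_(i < size phi) _; set S2 := \sum_(j < size psi) _ => e2 e1 H.
have : ('X - psi) * (S1 + S2) = phi * (phi * ('X - (psi \Po psi))).
  by rewrite mulrDr e1 e2; ring.
rewrite -H mulr0 => /esym/eqP; rewrite !mulf_eq0 subr_eq0 (negbTE phi_neq0).
by move=> /eqP.
Qed.

Lemma nonconst_phi_psiE : (2 <= size phi)%N -> psi = (psi`_0)%:P - 'X.
Proof.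
move=> hp; have [h0 hc psi_neqX] := nonconst_phi_comp_psi hp.
exact (poly_involution hchar (nonconst_phi_psi_involutive hp h0 hc) psi_neqX).
Qed.

Lemma size_phi_le1 : (size phi <= 1)%N.
Proof.
rewrite leqNgt; apply/negP => hp.
have phi_neq0 : phi != 0 by rewrite -size_poly_eq0; case: (size phi) hp.
have := Q_RB (expseq 'X) (expseq 'X) 1.
rewrite hmul0_1 !cover_zero_0 mulr0 mul0r addr0 hmul0_cover_zero_expseq.
rewrite hmul0_expseq_cover_zero !cover_zero_1 !ddiff_mull !comp_polyXr -mulr2n => H.
have hP : ddiff phi ('X + 'X) (psi + 'X) = 0.
  apply/eqP; move/eqP: H; rewrite eq_sym -mulr_natr mulf_eq0 (natr_poly_eq0 hchar).
  by rewrite orbF mulf_eq0 (negbTE phi_neq0).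
(* As [psi + X] is the constant [psi_0], the polynomial [phi (2 X)] is constant. *)
have := ddiffP phi ('X + 'X) (psi + 'X); rewrite hP mulr0 !peval_comp.
rewrite {1}(nonconst_phi_psiE hp) subrK => /esym/eqP; rewrite subr_eq0 comp_polyCr.
move=> /eqP phi2X; have : size (phi \Po ('X + 'X)) = size phi.
  apply: size_comp_poly2; rewrite -mulr2n -[_ *+ 2]mulr_natl -polyC_natr.
  by rewrite size_Cmul ?(natr_eq0 hchar) ?size_polyX.
rewrite phi2X => /esym size_phi.
by move: (size_polyC_leq1 phi.[psi`_0]); rewrite -size_phi leqNgt hp.
Qed.

Section ConstantPhi.
Hypothesis phi1 : (size phi = 1)%N.

Let phiC : phi = (phi`_0)%:P.
Proof. by apply: size1_polyC; rewrite phi1. Qed.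

Let phi0_neq0 : phi`_0 != 0.
Proof. by apply: contraTneq isT => phi00; move: phi1; rewrite phiC phi00 size_poly0. Qed.

Lemma const_phi_size_psi_le1 : (size psi <= 1)%N.
Proof.
have cover2 h :
    Q h 2 = phi`_0 *: h 1%N + phi`_0 *: \sum_(j < size psi) psi`_j *: h j.
  rewrite cover_zero_2 phi1 big_ord1 scaler_sumr; congr (_ + _).
  by apply: eq_bigr => j _; rewrite big_ord1 add0n scalerA mulrC -scalerA.
have := Q_RB (expseq 'X) (expseq 0) 2.
rewrite hmul0_cover_zero_expseq hmul0_expseq_cover_zero hmul0_2 !cover_zero_0 mulr0 mul0r addr0 add0r.
rewrite !cover2 !ddiff_mull !cover_zero_expseqE /= !comp_polyXr comp_poly0r -phiC.
rewrite !expr0 !mulr0 !addr0 !add0r comp_poly0r [_ + 'X]addrC.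
set A := ddiff psi 'X psi; set B := ddiff psi 'X ('X + (psi`_0)%:P) => H.
have phi_neq0 : phi != 0 by rewrite -size_poly_eq0 phi1.
have AB0 : A + B = 0.
  have : phi * phi * (A + B) = 0.
    move: H; rewrite -!mul_polyC -phiC => H.
    by match type of H with ?L = ?R => transitivity (R - L); [ring | rewrite H subrr] end.
  by move/eqP; rewrite mulf_eq0 (negbTE (mulf_neq0 phi_neq0 phi_neq0)) => /eqP.
rewrite leqNgt; apply/negP => psi_gt1.
have [psi_gt2|psi_le2] := ltnP 2 (size psi).
  (* [psi \Po psi = psi + (X - psi) * B] is too small for [deg psi >= 2]. *)
  have [sizeB _] := ddiff_XaddC hchar (psi`_0) psi_gt1; rewrite -/B in sizeB.
  have psi_comp : psi \Po psi = psi + ('X - psi) * B.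
    have := ddiffP psi 'X psi; rewrite -/A !peval_comp comp_polyXr.
    by rewrite -(addr0_eq AB0) mulrN => ->; ring.
  have size_Xpsi : (size ('X - psi)%R <= size psi)%N.
    apply: leq_trans (size_polyD _ _) _.
    by rewrite size_polyX size_polyN geq_max psi_gt1 leqnn.
  have := size_comp_poly psi psi; rewrite psi_comp.
  have := size_polyMleq ('X - psi) B.
  have := size_polyD psi (('X - psi) * B).
  have : (2 * (size psi).-1 <= (size psi).-1 * (size psi).-1)%N.
    by apply: leq_mul => //; lia.
  move: sizeB size_Xpsi psi_gt2; rewrite -!subn1.
  set s := size psi; set sB := size B; set sX := size ('X - psi).
  set T := size (psi + _); set M := size (_ * B); lia.
have psi2 : size psi = 2 by apply/eqP; rewrite eqn_leq psi_le2 psi_gt1.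
have ddiff2 x y : ddiff psi x y = (psi`_1)%:P.
  rewrite /ddiff psi2 big_ord_recr big_ord1 /= scaler0 add0r expr0 mulr0 addr0.
  by rewrite alg_polyC.
move/eqP: AB0; rewrite /A /B !ddiff2 -polyCD polyC_eq0 -mulr2n -mulr_natr.
rewrite mulf_eq0 (natr_eq0 hchar) orbF => /eqP psi1_0.
have : lead_coef psi != 0 by rewrite lead_coef_eq0 -size_poly_eq0 psi2.
by rewrite lead_coefE psi2 psi1_0 eqxx.
Qed.

Lemma const_phi_psi_eq0 : psi = 0.
Proof.
have psiC : psi = (psi`_0)%:P by apply: size1_polyC; exact: const_phi_size_psi_le1.
have QS h n : Q h n.+1 = phi`_0 *: h n + psi`_0 *: Q h n.
  rewrite coverS; congr (_ + _).
    by rewrite [in LHS]phiC (sum_coef_polyC _ (fun i => h (n + i)%N)) addn0.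
  rewrite [in LHS]psiC.
  rewrite (sum_coef_polyC _ (fun j => omega_cover _ _ _ (fun m => h (m + j)%N) n)) -psiC.
  by congr (_ *: Q _ n); apply: functional_extensionality => m; rewrite addn0.
have Q0_1 : Q (expseq 0) 1 = (phi`_0)%:P.
  by rewrite QS cover_zero_0 /expseq expr0 scaler0 addr0 alg_polyC.
have Q0_2 : Q (expseq 0) 2 = (psi`_0 * phi`_0)%:P.
  by rewrite QS Q0_1 /expseq expr1 scaler0 add0r -mul_polyC polyCM.
have := Q_RB (expseq 0) (expseq 0) 3.
rewrite hmul0_expseq0r hmul0_expseq0l hmul0_3 cover_zero_0 Q0_1 Q0_2 !QS !cover_zero_0.
rewrite /expseq !expr0n /= -!mul_polyC => H.
have : (phi`_0 * phi`_0 * psi`_0)%:P *+ 2 = 0.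
  rewrite !polyCM.
  by match type of H with ?L = ?R => transitivity (L - R); [ring | rewrite H subrr] end.
rewrite -mulr_natr => /eqP; rewrite mulf_eq0 (natr_poly_eq0 hchar) orbF.
rewrite polyC_eq0 !mulf_eq0 orbb (negbTE phi0_neq0) /= => /eqP psi0.
by rewrite psiC psi0.
Qed.

End ConstantPhi.

End ZeroOperatorOnPolynomials.

(* The truncated polynomial algebra [A[e]/(e^3)], with [Trunc3 a b c = a + b e + c e^2]. *)
Section Truncation.
Variables (k : idomainType) (A : comAlgType k).

Record trunc3 : Type := Trunc3 { tc0 : A; tc1 : A; tc2 : A }.

Definition trunc3_tuple (x : trunc3) : A * A * A := (tc0 x, tc1 x, tc2 x).
Definition tuple_trunc3 (p : A * A * A) : trunc3 := Trunc3 p.1.1 p.1.2 p.2.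
Lemma trunc3_tupleK : cancel trunc3_tuple tuple_trunc3. Proof. by case. Qed.
HB.instance Definition _ := Choice.copy trunc3 (can_type trunc3_tupleK).

Lemma trunc3_eq (x y : trunc3) :
  tc0 x = tc0 y -> tc1 x = tc1 y -> tc2 x = tc2 y -> x = y.
Proof. by case: x y => ? ? ? [? ? ?] /= -> -> ->. Qed.

Definition tzero := Trunc3 0 0 0.
Definition topp x := Trunc3 (- tc0 x) (- tc1 x) (- tc2 x).
Definition tadd x y := Trunc3 (tc0 x + tc0 y) (tc1 x + tc1 y) (tc2 x + tc2 y).
Lemma taddA : associative tadd. Proof. by move=> x y z; apply: trunc3_eq => /=; ring. Qed.
Lemma taddC : commutative tadd. Proof. by move=> x y; apply: trunc3_eq => /=; ring. Qed.
Lemma tadd0 : left_id tzero tadd. Proof. by move=> x; apply: trunc3_eq => /=; ring. Qed.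
Lemma taddN : left_inverse tzero topp tadd.
Proof. by move=> x; apply: trunc3_eq => /=; ring. Qed.
HB.instance Definition _ := GRing.isZmodule.Build trunc3 taddA taddC tadd0 taddN.

Definition tscale (a : k) x := Trunc3 (a *: tc0 x) (a *: tc1 x) (a *: tc2 x).
Lemma tscaleA a b x : tscale a (tscale b x) = tscale (a * b) x.
Proof. by apply: trunc3_eq => /=; rewrite scalerA. Qed.
Lemma tscale1 : left_id 1 tscale.
Proof. by move=> x; apply: trunc3_eq => /=; rewrite scale1r. Qed.
Lemma tscaleDr : right_distributive tscale +%R.
Proof. by move=> a x y; apply: trunc3_eq => /=; rewrite scalerDr. Qed.
Lemma tscaleDl x : {morph tscale^~ x : a b / a + b}.
Proof. by move=> a b; apply: trunc3_eq => /=; rewrite scalerDl. Qed.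
HB.instance Definition _ :=
  GRing.Zmodule_isLmodule.Build k trunc3 tscaleA tscale1 tscaleDr tscaleDl.

Definition tmul x y := Trunc3 (tc0 x * tc0 y) (tc0 x * tc1 y + tc1 x * tc0 y)
  (tc0 x * tc2 y + tc1 x * tc1 y + tc2 x * tc0 y).
Definition tone := Trunc3 1 0 0.
Lemma tmulA : associative tmul. Proof. by move=> x y z; apply: trunc3_eq => /=; ring. Qed.
Lemma tmulC : commutative tmul. Proof. by move=> x y; apply: trunc3_eq => /=; ring. Qed.
Lemma tmul1 : left_id tone tmul. Proof. by move=> x; apply: trunc3_eq => /=; ring. Qed.
Lemma tmulDl : left_distributive tmul +%R.
Proof. by move=> x y z; apply: trunc3_eq => /=; ring. Qed.
Lemma tone_neq0 : tone != 0.
Proof. by apply/eqP => /(congr1 tc0) /eqP; rewrite oner_eq0. Qed.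
HB.instance Definition _ :=
  GRing.Zmodule_isComNzRing.Build trunc3 tmulA tmulC tmul1 tmulDl tone_neq0.

Lemma tscaleAl (a : k) (x y : trunc3) : a *: (x * y) = (a *: x) * y.
Proof. by apply: trunc3_eq => /=; rewrite ?scalerDr ?scalerAl. Qed.
HB.instance Definition _ := GRing.Lmodule_isLalgebra.Build k trunc3 tscaleAl.
HB.instance Definition _ := GRing.Lalgebra_isComAlgebra.Build k trunc3.

(* Twice the formal integral [e^i |-> 2 e^(i+1) / (i+1)], which needs no division. *)
Definition integral2 (x : trunc3) : trunc3 := Trunc3 0 (tc0 x *+ 2) (tc1 x).

Lemma integral2_RB : is_RB0 integral2.
Proof.
by split=> [a x y|x y]; apply: trunc3_eq => //=; ring.
Qed.

Definition tconst (a : A) : trunc3 := Trunc3 a 0 0.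

Lemma tconstD a b : tconst a + tconst b = tconst (a + b).
Proof. by apply: trunc3_eq => /=; rewrite ?addr0. Qed.

Lemma tconstM a b : tconst a * tconst b = tconst (a * b).
Proof. by apply: trunc3_eq => /=; ring. Qed.

Lemma tconstX a j : tconst a ^+ j = tconst (a ^+ j).
Proof. by elim: j => [|j IH]; rewrite ?expr0 // !exprS IH tconstM. Qed.

Lemma integral2_tconstM a x : integral2 (tconst a * x) = tconst a * integral2 x.
Proof. by apply: trunc3_eq => /=; ring. Qed.

Lemma peval_tconst (p : {poly k}) a : peval p (tconst a) = tconst (peval p a).
Proof.
have tc0D : {morph tc0 : x y / x + y} by [].
have tc1D : {morph tc1 : x y / x + y} by [].
have tc2D : {morph tc2 : x y / x + y} by [].
rewrite /peval; apply: trunc3_eq => /=.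
- by rewrite (big_morph _ tc0D (erefl : tc0 0 = 0)); apply: eq_bigr => j _; rewrite tconstX.
- by rewrite (big_morph _ tc1D (erefl : tc1 0 = 0)) big1 // => j _; rewrite tconstX /= scaler0.
- by rewrite (big_morph _ tc2D (erefl : tc2 0 = 0)) big1 // => j _; rewrite tconstX /= scaler0.
Qed.

End Truncation.

Lemma cover_phi0_geom (k : idomainType) (R : comAlgType k) (psi : {poly k})
    (P : R -> R) (nu c : R) : (forall x, P (nu * x) = nu * P x) ->
  forall n, omega_cover 0 psi P (fun m => c * nu ^+ m) n = peval psi nu ^+ n * P c.
Proof.
move=> Pnu; have Pnuj j x : P (nu ^+ j * x) = nu ^+ j * P x.
  by elim: j x => [|j IH] x; rewrite ?expr0 ?mul1r // exprS -mulrA Pnu IH mulrA.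
elim=> [|n IH] /=; first by rewrite mulr1 expr0 mul1r.
rewrite size_poly0 big_ord0 add0r exprS -mulrA -IH /peval mulr_suml.
apply: eq_bigr => j _; rewrite -scalerAl -(cover_mulr (Pnuj j)); congr (_ *: _).
by congr omega_cover; apply: functional_extensionality => m; rewrite exprD; ring.
Qed.

Section ZeroPhi.
Variable k : idomainType.
Hypothesis hchar : [pchar k] =i pred0.
Variable psi : {poly k}.
Local Notation Q := (omega_cover 0 psi (@integral2 k {poly k})).
Hypothesis Q_RB : forall (f g : nat -> trunc3 {poly k}) n,
  hmul0 (Q f) (Q g) n = Q (hmul0 (Q f) g) n + Q (hmul0 f (Q g)) n.

Lemma cover_phi0_tconst c (a : {poly k}) n :
  Q (fun m => c * tconst a ^+ m) n = tconst (psi \Po a) ^+ n * integral2 c.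
Proof. by rewrite (cover_phi0_geom psi c (integral2_tconstM a)) peval_tconst peval_comp. Qed.

Lemma cover_phi0_expseq (a : {poly k}) :
  Q (expseq (tconst a)) = fun m => integral2 1 * tconst (psi \Po a) ^+ m.
Proof.
apply: functional_extensionality => m; rewrite mulrC -cover_phi0_tconst.
by congr omega_cover; apply: functional_extensionality => i; rewrite mul1r.
Qed.

Lemma phi0_identity :
  (psi + (psi \Po 0)) *+ 4 = ((psi \Po psi) + (psi \Po ('X + (psi \Po 0)))) *+ 2.
Proof.
have := Q_RB (expseq (tconst 'X)) (expseq (tconst 0)) 1.
rewrite [hmul0 _ (expseq _)]hmul0_expseq0r !cover_phi0_expseq comp_polyXr.
set I1 := integral2 1.
have -> : hmul0 (expseq (tconst 'X)) (fun m => I1 * tconst (psi \Po 0) ^+ m)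
    = fun m => I1 * tconst ('X + (psi \Po 0)) ^+ m.
  apply: functional_extensionality => m.
  by rewrite hmul0Mr (hmul0_expseq (tconst 'X) (tconst (psi \Po 0))) tconstD.
rewrite hmul0_1 [X in _ = X + _]cover_phi0_tconst [X in _ = _ + X]cover_phi0_tconst.
rewrite !expr1 !expr0 !mulr1 => /(congr1 (@tc2 _ _)) /= H.
by match type of H with ?L = ?R => transitivity L; [ring | rewrite H; ring] end.
Qed.

Lemma in_T0_phi0 : in_T0 0 psi.
Proof.
have := phi0_identity; rewrite comp_poly0r; set c := psi`_0 => E4.
have E : (psi + c%:P) *+ 2 = (psi \Po psi) + (psi \Po ('X + c%:P)).
  apply/eqP; rewrite -subr_eq0.
  have : ((psi + c%:P) *+ 2 - ((psi \Po psi) + (psi \Po ('X + c%:P)))) * 2%:R = 0.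
    by rewrite mulrBl !mulr_natr -mulrnA E4 subrr.
  by move/eqP; rewrite mulf_eq0 (natr_poly_eq0 hchar) orbF.
have [psi_le2|psi_gt2] := leqP (size psi) 2; last first.
  (* Otherwise [deg (psi \Po psi) = (deg psi)^2] exceeds [deg psi]. *)
  have size_transl : size (psi \Po ('X + c%:P)) = size psi.
    by apply: size_comp_poly2; rewrite size_XaddC.
  have : (size (psi \Po psi) <= size psi)%N.
    rewrite (canRL (addrK _) (esym E)); apply: leq_trans (size_polyD _ _) _.
    rewrite size_polyN size_transl geq_max leqnn andbT mulr2n.
    apply: leq_trans (size_polyD _ _) _; rewrite geq_max andbb.
    apply: leq_trans (size_polyD _ _) _; rewrite geq_max leqnn /=.
    by apply: leq_trans (size_polyC_leq1 _) _; apply: ltnW (ltnW psi_gt2).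
  have := size_comp_poly psi psi; move: psi_gt2; rewrite -!subn1.
  set s := size psi; set t := size (_ \Po _); nia.
have psiE := size_le2_poly psi_le2; rewrite -/c in psiE; set b := psi`_1 in psiE.
have comp_psi q : psi \Po q = c%:P + b%:P * q.
  transitivity ((c%:P + b%:P * 'X) \Po q); first by rewrite -psiE.
  by rewrite comp_polyD comp_polyM !comp_polyC comp_polyX.
have key : (b * (b - 1))%:P * 'X + (c * (b - 1) *+ 2)%:P = 0.
  move: E; rewrite !comp_psi psiE polyCMn !polyCM polyCB polyC1 => E.
  by match type of E with ?L = ?R => transitivity (R - L); [ring | rewrite E subrr] end.
have := congr1 (fun q : {poly k} => q`_1) key; have := congr1 (fun q : {poly k} => q`_0) key.
rewrite /= !coefD !coefCM !coefC !coefX /= mulr0 mulr1 add0r addr0 => c_b.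
move/eqP; rewrite mulf_eq0 subr_eq0 => /orP [/eqP b0|/eqP b1]; last first.
  by right; exists c; rewrite psiE b1 mul1r.
left; exists 0; split; first by rewrite polyC0.
move/eqP: c_b; rewrite -mulr_natr mulf_eq0 (natr_eq0 hchar) orbF b0 sub0r.
by rewrite mulrN1 oppr_eq0 psiE b0 mul0r addr0 => /eqP ->.
Qed.

End ZeroPhi.

Theorem theorem3p1 (k : idomainType) (hchar : [pchar k] =i pred0)
    (phi psi : {poly k}) :
  (forall (R : comAlgType k) (P : R -> R),
      is_RB0 P -> is_RB0_hurwitz (omega_cover phi psi P))
  <-> in_T0 phi psi.
Proof.
split=> [RB_all|[[a0 [-> ->]]|[b0 [-> ->]]] R P P_RB]; last first.
- exact: RB_cover_XaddC.
- exact: RB_cover_polyC.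
have zero_RB : is_RB0 (fun _ : {poly k} => 0).
  by split=> [a x y|x y]; rewrite ?scaler0 ?addr0 ?mulr0.
have Q_RB := (RB_all _ _ zero_RB).2.
case: (ltngtP (size phi) 1) => [|phi_gt1|phi1].
- rewrite ltnS leqn0 size_poly_eq0 => /eqP phi0; rewrite phi0 in RB_all *.
  exact (in_T0_phi0 hchar (RB_all _ _ (@integral2_RB k {poly k})).2).
- by move: (size_phi_le1 hchar Q_RB); rewrite leqNgt phi_gt1.
- left; exists phi`_0; split; first by apply: size1_polyC; rewrite phi1.
  exact (const_phi_psi_eq0 hchar Q_RB phi1).
Qed.
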